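(* Let $f : X \to \mathbb{R}$ be semi-Borel. If Player I has a winning strategy in $\Gamma(f)$, then there exist $r \in \mathbb{R}$ and a Cantor set $C \subseteq X$ such that $C \cap \{f \ge r\}$ is countable and dense in $C$.
   Context: Let $A$ be a non-empty countable set and $T$ a pruned tree on $A$ (a set of finite sequences of elements of $A$, closed under initial segments, in which every sequence has a proper extension in $T$). Let $X$ be the set of infinite branches of $T$, with the topology generated by the cylinder sets $O(s) = \{x \in X : s \text{ is an initial segment of } x\}$, $s \in T$. $f$ is semi-Borel if for each $r \in \mathbb{R}$ the set $\{f \ge r\} = \{x \in X : f(x) \ge r\}$ is co-analytic. A Cantor set is a subset homeomorphic to the middle-thirds Cantor set. The game $\Gamma(f)$: Player I and Player II alternate, Player I moving first; Player I plays $x_0, x_1, \dots \in A$ subject to $(x_0,\dots,x_t) \in T$ for all $t$, and after each move $x_t$ Player II plays a real number $v_t$. Player II wins the run iff $f(x_0,x_1,\dots) = \limsup_{t\to\infty} v_t$; otherwise Player I wins. *)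

From Stdlib Require Import Reals List.
From Coquelicot Require Import Coquelicot.
Import ListNotations.
Open Scope R_scope.

Definition prefix {B : Type} (x : nat -> B) (n : nat) : list B :=
  map x (seq 0 n).

Definition countable_type (A : Type) : Prop :=
  exists enc : A -> nat, forall a b, enc a = enc b -> a = b.

Definition countable_set {B : Type} (S : B -> Prop) : Prop :=
  exists g : nat -> B, forall b, S b -> exists n, g n = b.

Definition is_tree {A : Type} (T : list A -> Prop) : Prop :=
  T [] /\ forall s t, T (s ++ t) -> T s.

Definition is_pruned {A : Type} (T : list A -> Prop) : Prop :=
  forall s, T s -> exists a, T (s ++ [a]).

Definition body {A : Type} (T : list A -> Prop) (x : nat -> A) : Prop :=
  forall n, T (prefix x n).

(** Topology on A^N (A discrete, product topology), whose restriction to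
    [body T] is the topology generated by the cylinders O(s).  Subspaces
    carry the induced topology. *)
Definition open_seq {A : Type} (U : (nat -> A) -> Prop) : Prop :=
  forall x, U x -> exists n, forall y, prefix y n = prefix x n -> U y.

(** Analytic subsets of A^N (hence of X): projections of closed subsets of
    A^N x N^N; closed subsets of A^N x N^N are exactly the sets
    {(x,y) | forall n, U (x|n) (y|n)}. *)
Definition analytic {A : Type} (S : (nat -> A) -> Prop) : Prop :=
  exists U : list A -> list nat -> Prop,
    forall x, S x <-> exists y : nat -> nat, forall n, U (prefix x n) (prefix y n).

Definition coanalytic_in {A : Type} (X P : (nat -> A) -> Prop) : Prop :=
  analytic (fun x => X x /\ ~ P x).

Definition semi_Borel {A : Type} (T : list A -> Prop) (f : (nat -> A) -> R) : Prop :=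
  forall r : R, coanalytic_in (body T) (fun x => body T x /\ f x >= r).

(** The middle-thirds Cantor set: intersection of the stages C_n, with
    C_0 = [0,1] and C_{n+1} = C_n/3 ∪ (2/3 + C_n/3). *)
Fixpoint cantor_stage (n : nat) (x : R) : Prop :=
  match n with
  | O => 0 <= x <= 1
  | S m => cantor_stage m (3 * x) \/ cantor_stage m (3 * x - 2)
  end.

Definition middle_thirds_cantor (x : R) : Prop := forall n, cantor_stage n x.

(** C ⊆ A^N is homeomorphic (in the induced topologies) to a subset K ⊆ R via h:
    h is a bijection K -> C, continuous, and with continuous inverse
    (equivalently: open sets of K correspond exactly to open sets of C). *)
Definition homeomorphic_R_seq {A : Type} (K : R -> Prop) (C : (nat -> A) -> Prop) : Prop :=
  exists h : R -> (nat -> A),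
    (forall k, K k -> C (h k)) /\
    (forall k1 k2, K k1 -> K k2 -> h k1 = h k2 -> k1 = k2) /\
    (forall c, C c -> exists k, K k /\ h k = c) /\
    (forall U, open_seq U -> exists V, open V /\ forall k, K k -> (U (h k) <-> V k)) /\
    (forall V, open V -> exists U, open_seq U /\ forall k, K k -> (V k <-> U (h k))).

Definition Cantor_set {A : Type} (C : (nat -> A) -> Prop) : Prop :=
  homeomorphic_R_seq middle_thirds_cantor C.

(** D is dense in C (induced topology): every non-empty relatively open
    subset of C, i.e. every basic one C ∩ O(c|n), meets D. *)
Definition dense_in {A : Type} (D C : (nat -> A) -> Prop) : Prop :=
  forall c n, C c -> exists d, D d /\ prefix d n = prefix c n.

(** The game Γ(f).  A strategy for Player I maps the list (v_0,...,v_{t-1})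
    of Player II's previous moves to Player I's next move x_t (Player I's own
    previous moves are determined by these). *)
Definition play_I {A : Type} (sigma : list R -> A) (v : nat -> R) : nat -> A :=
  fun t => sigma (prefix v t).

(** Player II wins a run iff f(x) = limsup v_t (limsup in the extended reals).
    A winning strategy for Player I always plays legally and makes Player II
    lose against every sequence of moves of Player II. *)
Definition I_winning_strategy {A : Type} (T : list A -> Prop) (f : (nat -> A) -> R)
    (sigma : list R -> A) : Prop :=
  forall v : nat -> R,
    (forall t, T (prefix (play_I sigma v) (S t))) /\
    Finite (f (play_I sigma v)) <> LimSup_seq v.

From Stdlib Require Import Reals List.
From Coquelicot Require Import Coquelicot.
From Stdlib Require Import Lia Lra ZArith Cantor.
From Stdlib Require Import Classical ClassicalEpsilon FunctionalExtensionality.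
Import ListNotations.
Open Scope R_scope.

(** If every superlevel set {f ≥ r} is G_δ in X, Player II wins
       Γ(f): writing {f ≥ q_j} = ∩_k U_{j,k} (q_j enumerating the rationals),
       II plays at each stage the largest rational q_j whose open sets
       U_{i,k} (q_i ≤ q_j, i,k ≤ K) have just been confirmed to contain the
       whole cylinder of I's current position, for a new level K ≥ j.  The
       limsup of II's moves is then f(x).  So, as I wins, some {f ≥ r} is
       not G_δ, i.e. its complement A in X cannot be separated from
       B = {f ≥ r} by an F_σ set; A is analytic since f is semi-Borel.
    2. Hurewicz.  An analytic set A which is not F_σ-separable from a
       disjoint set B contains a copy h(2^ℕ) of Cantor space with
       h(p) ∈ B exactly when p is eventually 0.  The embedding h is built by
       a fusion argument inside the "non-separable kernel" of a closed set
       projecting onto A.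
    3. Cantor sets.  Ternary expansions identify 2^ℕ with the middle-thirds
       Cantor set, so h(2^ℕ) is a Cantor set; the eventually-zero sequences
       are countable and dense, whence C ∩ {f ≥ r} = h(eventually 0) is
       countable and dense in C. *)

Definition agree {B : Type} (n : nat) (x y : nat -> B) : Prop :=
  forall i, (i < n)%nat -> x i = y i.

Lemma agree_refl {B : Type} (x : nat -> B) n : agree n x x.
Proof. intros i _. reflexivity. Qed.

Lemma agree_sym {B : Type} (x y : nat -> B) n : agree n x y -> agree n y x.
Proof. intros H i Hi. symmetry. auto. Qed.

Lemma agree_trans {B : Type} (x y z : nat -> B) n :
  agree n x y -> agree n y z -> agree n x z.
Proof. intros H1 H2 i Hi. rewrite H1 by auto. auto. Qed.

Lemma agree_le {B : Type} (x y : nat -> B) m n :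
  agree m x y -> (n <= m)%nat -> agree n x y.
Proof. intros H Hn i Hi. apply H. lia. Qed.

Lemma prefix_S {B : Type} (x : nat -> B) n : prefix x (S n) = prefix x n ++ [x n].
Proof. unfold prefix. rewrite seq_S, map_app. reflexivity. Qed.

Lemma prefix_length {B : Type} (x : nat -> B) n : length (prefix x n) = n.
Proof. unfold prefix. rewrite length_map, length_seq. reflexivity. Qed.

Lemma prefix_agree {B : Type} (x y : nat -> B) n :
  prefix x n = prefix y n <-> agree n x y.
Proof.
  induction n as [|n IH].
  - split; [intros _ i Hi; lia | reflexivity].
  - rewrite !prefix_S. split.
    + intros H. apply app_inj_tail in H as [H1 H2].
      apply IH in H1. intros i Hi.
      destruct (Nat.eq_dec i n); [subst; auto | apply H1; lia].
    + intros H. f_equal.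
      * apply IH. intros i Hi. apply H. lia.
      * rewrite (H n); auto.
Qed.

Lemma first_difference {B : Type} (p p' : nat -> B) :
  p <> p' -> exists k, agree k p p' /\ p k <> p' k.
Proof.
  intros H. apply NNPP. intros Hn. apply H. apply functional_extensionality.
  assert (Hall : forall k, agree k p p').
  { induction k as [|k IH]; intros i Hi; [lia|].
    destruct (Nat.eq_dec i k) as [->|]; [|apply IH; lia].
    apply NNPP. intros Hne. apply Hn. exists k. auto. }
  intros i. apply (Hall (S i)). lia.
Qed.

(** ** The middle-thirds Cantor set as a copy of 2^ℕ *)

Definition ternary_digit (b : bool) : R := if b then 2 else 0.

(** [ternary_left p n]: left end of the n-th level ternary interval
    selected by the digits p_0, ..., p_{n-1}; the interval has length 3^-n. *)
Fixpoint ternary_left (p : nat -> bool) (n : nat) : R :=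
  match n with
  | O => 0
  | S n => (ternary_digit (p O) + ternary_left (fun i => p (S i)) n) / 3
  end.

Definition in_ternary_interval (p : nat -> bool) (n : nat) (x : R) : Prop :=
  ternary_left p n <= x <= ternary_left p n + / 3 ^ n.

Lemma pow3_pos n : 0 < 3 ^ n.
Proof. apply pow_lt. lra. Qed.

Lemma inv_pow3_pos n : 0 < / 3 ^ n.
Proof. apply Rinv_0_lt_compat, pow3_pos. Qed.

Lemma inv_pow3_S n : / 3 ^ (S n) = / 3 ^ n / 3.
Proof. simpl. field. apply Rgt_not_eq, pow3_pos. Qed.

Lemma inv_pow3_le1 n : / 3 ^ n <= 1.
Proof.
  induction n; [simpl; lra|]. rewrite inv_pow3_S. pose proof (inv_pow3_pos n). lra.
Qed.

Lemma inv_pow3_small eps : 0 < eps -> exists n, / 3 ^ n < eps.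
Proof.
  intros He. destruct (archimed_cor1 eps He) as [N [HN HN0]].
  assert (Hn : forall n, INR n < 3 ^ n).
  { induction n; [simpl; lra|]. rewrite S_INR. simpl.
    assert (1 <= 3 ^ n) by (clear; induction n; simpl; lra). lra. }
  exists N. apply Rle_lt_trans with (/ INR N); auto.
  apply Rlt_le, Rinv_lt_contravar; auto.
  apply Rmult_lt_0_compat; [apply lt_0_INR; auto | apply pow3_pos].
Qed.

Lemma ternary_left_agree p p' n : agree n p p' -> ternary_left p n = ternary_left p' n.
Proof.
  revert p p'. induction n as [|n IH]; intros p p' H; simpl; auto.
  rewrite (H O) by lia. f_equal. f_equal.
  apply IH. intros i Hi. apply H. lia.
Qed.

Lemma ternary_left_bounds p n : 0 <= ternary_left p n /\ ternary_left p n + / 3 ^ n <= 1.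
Proof.
  revert p. induction n as [|n IH]; intros p.
  - simpl. rewrite Rinv_1. lra.
  - destruct (IH (fun i => p (S i))). cbn [ternary_left]. rewrite inv_pow3_S.
    unfold ternary_digit; destruct (p O); split; lra.
Qed.

Lemma ternary_nested p m n : (m <= n)%nat ->
  ternary_left p m <= ternary_left p n /\
  ternary_left p n + / 3 ^ n <= ternary_left p m + / 3 ^ m.
Proof.
  revert p n. induction m as [|m IH]; intros p n Hmn.
  - destruct (ternary_left_bounds p n). simpl. rewrite Rinv_1. lra.
  - destruct n as [|n]; [lia|].
    destruct (IH (fun i => p (S i)) n) as [H1 H2]; [lia|].
    cbn [ternary_left]. rewrite !inv_pow3_S. lra.
Qed.

Lemma in_ternary_interval_agree p p' n x :
  agree n p p' -> in_ternary_interval p n x -> in_ternary_interval p' n x.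
Proof. intros H. unfold in_ternary_interval. rewrite (ternary_left_agree p p' n H). auto. Qed.

Lemma ternary_gap p p' m x y : ~ agree m p p' ->
  in_ternary_interval p m x -> in_ternary_interval p' m y -> / 3 ^ m <= Rabs (x - y).
Proof.
  revert p p' x y. induction m as [|m IH]; intros p p' x y Hna Hx Hy.
  - exfalso. apply Hna. intros i Hi. lia.
  - unfold in_ternary_interval in *. cbn [ternary_left] in *. rewrite inv_pow3_S in *.
    destruct (Bool.bool_dec (p O) (p' O)) as [E|E].
    + assert (Hna' : ~ agree m (fun i => p (S i)) (fun i => p' (S i))).
      { intros Ha. apply Hna. intros [|i] Hi; auto. apply Ha. lia. }
      specialize (IH _ _ (3 * x - ternary_digit (p O)) (3 * y - ternary_digit (p' O)) Hna').
      rewrite <- E in *.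
      assert (Hgap : / 3 ^ m <= Rabs (3 * (x - y))).
      { replace (3 * (x - y)) with
          (3 * x - ternary_digit (p O) - (3 * y - ternary_digit (p O))) by ring.
        apply IH; lra. }
      rewrite Rabs_mult, Rabs_right in Hgap by lra. lra.
    + destruct (ternary_left_bounds (fun i => p (S i)) m).
      destruct (ternary_left_bounds (fun i => p' (S i)) m).
      pose proof (inv_pow3_le1 m).
      unfold ternary_digit in *. destruct (p O), (p' O); try congruence.
      * rewrite Rabs_right; lra.
      * rewrite Rabs_left1; lra.
Qed.

Lemma cantor_stage_intervals n x :
  cantor_stage n x <-> exists p, in_ternary_interval p n x.
Proof.
  revert x. induction n as [|n IH]; intros x.
  - unfold in_ternary_interval. simpl. rewrite Rinv_1. split.
    + intros H. exists (fun _ => false). lra.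
    + intros [p Hp]. lra.
  - cbn [cantor_stage]. rewrite !IH. unfold in_ternary_interval.
    cbn [ternary_left]. rewrite inv_pow3_S. split.
    + intros [[p Hp]|[p Hp]];
        [exists (fun i => match i with O => false | S i => p i end)
        |exists (fun i => match i with O => true | S i => p i end)];
        change (ternary_left (fun i => p i) n) with (ternary_left p n);
        unfold ternary_digit; lra.
    + intros [p Hp]. unfold ternary_digit in Hp.
      destruct (p O); [right|left]; exists (fun i => p (S i)); lra.
Qed.

(** The left ends along p, bounded by 1; their supremum is the point coded by p. *)
Definition ternary_partial_sum (p : nat -> bool) (x : R) : Prop :=
  exists n, x = ternary_left p n.

Lemma ternary_partial_sum_bound p : bound (ternary_partial_sum p).
Proof.
  exists 1. intros x [n ->]. destruct (ternary_left_bounds p n).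
  pose proof (inv_pow3_pos n). lra.
Qed.

Lemma ternary_partial_sum_inhabited p : exists x, ternary_partial_sum p x.
Proof. exists 0. exists O. reflexivity. Qed.

(** [ternary_point p] = Σ 2 p_i 3^-(i+1), the point with ternary digits 2p. *)
Definition ternary_point (p : nat -> bool) : R :=
  proj1_sig (completeness _ (ternary_partial_sum_bound p) (ternary_partial_sum_inhabited p)).

Lemma ternary_point_in p n : in_ternary_interval p n (ternary_point p).
Proof.
  unfold ternary_point. destruct (completeness _ _ _) as [m [Hub Hlub]]. simpl. split.
  - apply Hub. exists n. reflexivity.
  - apply Hlub. intros x [k ->].
    destruct (Compare_dec.le_ge_dec k n) as [Hk|Hk];
      [destruct (ternary_nested p k n Hk); pose proof (inv_pow3_pos n)
      |destruct (ternary_nested p n k Hk); pose proof (inv_pow3_pos k)]; lra.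
Qed.

Lemma ternary_point_agree p p' n :
  agree n p p' -> Rabs (ternary_point p - ternary_point p') <= / 3 ^ n.
Proof.
  intros H. pose proof (ternary_point_in p n) as H1.
  pose proof (in_ternary_interval_agree p' p n _ (agree_sym _ _ _ H) (ternary_point_in p' n)).
  unfold in_ternary_interval in *. apply Rabs_le. lra.
Qed.

Lemma ternary_point_close p p' n :
  Rabs (ternary_point p - ternary_point p') < / 3 ^ n -> agree n p p'.
Proof.
  intros H. apply NNPP. intros Hna.
  pose proof (ternary_gap p p' n _ _ Hna (ternary_point_in p n) (ternary_point_in p' n)).
  lra.
Qed.

Lemma ternary_point_inj p p' : ternary_point p = ternary_point p' -> p = p'.
Proof.
  intros H. apply functional_extensionality. intros i.
  apply (ternary_point_close p p' (S i)); [|lia].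
  rewrite H, Rminus_diag, Rabs_R0. apply inv_pow3_pos.
Qed.

Lemma ternary_point_cantor p : middle_thirds_cantor (ternary_point p).
Proof. intros n. apply cantor_stage_intervals. exists p. apply ternary_point_in. Qed.

Lemma ternary_point_surj k : middle_thirds_cantor k -> exists p, ternary_point p = k.
Proof.
  intros Hk.
  set (pn := fun n => epsilon (inhabits (fun _ : nat => false))
                              (fun p => in_ternary_interval p n k)).
  assert (Hpn : forall n, in_ternary_interval (pn n) n k).
  { intros n. apply epsilon_spec, cantor_stage_intervals, Hk. }
  assert (Hcoh : forall m n, (m <= n)%nat -> agree m (pn n) (pn m)).
  { intros m n Hmn. apply NNPP. intros Hna.
    assert (Hm : in_ternary_interval (pn n) m k).
    { destruct (ternary_nested (pn n) m n Hmn). destruct (Hpn n). split; lra. }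
    pose proof (ternary_gap _ _ m k k Hna Hm (Hpn m)).
    rewrite Rminus_diag, Rabs_R0 in *. pose proof (inv_pow3_pos m). lra. }
  exists (fun i => pn (S i) i).
  destruct (Req_dec (ternary_point (fun i => pn (S i) i)) k) as [|Hne]; auto.
  exfalso. assert (Hd : 0 < Rabs (ternary_point (fun i => pn (S i) i) - k))
    by (apply Rabs_pos_lt; lra).
  destruct (inv_pow3_small _ Hd) as [n Hn].
  assert (Ha : agree n (pn n) (fun i => pn (S i) i)).
  { intros i Hi. apply (Hcoh (S i) n); lia. }
  pose proof (ternary_point_in (fun i => pn (S i) i) n).
  pose proof (in_ternary_interval_agree _ _ n k Ha (Hpn n)).
  assert (Rabs (ternary_point (fun i => pn (S i) i) - k) <= / 3 ^ n).
  { unfold in_ternary_interval in *. apply Rabs_le. lra. }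
  lra.
Qed.

Lemma homeomorphic_of_continuous {A : Type} (K : R -> Prop) (C : (nat -> A) -> Prop)
    (g : R -> nat -> A) :
  (forall k, K k -> C (g k)) ->
  (forall k1 k2, K k1 -> K k2 -> g k1 = g k2 -> k1 = k2) ->
  (forall c, C c -> exists k, K k /\ g k = c) ->
  (forall k n, K k -> exists rho, 0 < rho /\
     forall k', K k' -> Rabs (k' - k) < rho -> agree n (g k') (g k)) ->
  (forall k eps, K k -> 0 < eps -> exists n,
     forall k', K k' -> agree n (g k') (g k) -> Rabs (k' - k) < eps) ->
  homeomorphic_R_seq K C.
Proof.
  intros HKC Hinj Hsurj Hcont Hicont.
  exists g. split; [|split; [|split; [|split]]]; auto.
  -
    intros U HU.
    exists (fun k => exists k', K k' /\ exists rho, 0 < rho /\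
        (forall k'', K k'' -> Rabs (k'' - k') < rho -> U (g k'')) /\ Rabs (k - k') < rho).
    split.
    + intros k [k' [Hk' [rho [Hrho [Hall Hd]]]]].
      assert (Hpos : 0 < rho - Rabs (k - k')) by lra.
      exists (mkposreal _ Hpos). intros y Hy.
      change (Rabs (y - k) < rho - Rabs (k - k')) in Hy.
      exists k'. split; auto. exists rho. repeat split; auto.
      replace (y - k') with ((y - k) + (k - k')) by ring.
      pose proof (Rabs_triang (y - k) (k - k')). lra.
    + intros k Hk. split.
      * intros HUk. destruct (HU _ HUk) as [n Hn].
        destruct (Hcont k n Hk) as [rho [Hrho Hg]].
        exists k. split; auto. exists rho. split; auto. split.
        -- intros k'' Hk'' Hd. apply Hn, prefix_agree. auto.
        -- rewrite Rminus_diag, Rabs_R0. auto.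
      * intros [k' [Hk' [rho [Hrho [Hall Hd]]]]]. auto.
  -
    intros V HV.
    exists (fun c => exists k, K k /\ V k /\ exists n,
        (forall k'', K k'' -> agree n (g k'') (g k) -> V k'') /\ agree n c (g k)).
    split.
    + intros c [k [Hk [HVk [n [Hall Ha]]]]]. exists n. intros y Hy.
      apply prefix_agree in Hy. exists k. repeat split; auto. exists n. split; auto.
      eapply agree_trans; eauto.
    + intros k Hk. split.
      * intros HVk. destruct (HV k HVk) as [eps Heps].
        destruct (Hicont k eps Hk (cond_pos eps)) as [n Hn].
        exists k. repeat split; auto. exists n. split; [|apply agree_refl].
        intros k'' Hk'' Ha. apply Heps. apply Hn; auto.
      * intros [k0 [Hk0 [HV0 [n [Hall Ha]]]]]. auto.
Qed.

Lemma Cantor_set_image {A : Type} (h : (nat -> bool) -> nat -> A) :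
  (forall p p', h p = h p' -> p = p') ->
  (forall p p' n, agree n p p' -> agree n (h p) (h p')) ->
  (forall p n, exists N, forall p', agree N (h p) (h p') -> agree n p p') ->
  Cantor_set (fun c => exists p, h p = c).
Proof.
  intros Hinj Hc Hic.
  set (code := fun k => epsilon (inhabits (fun _ : nat => false)) (fun p => ternary_point p = k)).
  assert (Hcode : forall k, middle_thirds_cantor k -> ternary_point (code k) = k).
  { intros k Hk. apply epsilon_spec, ternary_point_surj, Hk. }
  assert (Hcode' : forall p, code (ternary_point p) = p).
  { intros p. apply ternary_point_inj, Hcode, ternary_point_cantor. }
  apply (homeomorphic_of_continuous _ _ (fun k => h (code k))).
  - intros k _. eexists; reflexivity.
  - intros k1 k2 H1 H2 E. apply Hinj in E. rewrite <- (Hcode k1), <- (Hcode k2), E; auto.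
  - intros c [p <-]. exists (ternary_point p). split; [apply ternary_point_cantor|].
    rewrite Hcode'. reflexivity.
  - intros k n Hk. exists (/ 3 ^ n). split; [apply inv_pow3_pos|].
    intros k' Hk' Hd. apply Hc, ternary_point_close. rewrite !Hcode; auto.
  - intros k eps Hk Heps. destruct (inv_pow3_small eps Heps) as [n Hn].
    destruct (Hic (code k) n) as [N HN]. exists N. intros k' Hk' Ha.
    apply agree_sym, HN, ternary_point_agree in Ha. rewrite !Hcode in Ha; auto.
    rewrite <- Rabs_Ropp. replace (- (k' - k)) with (k - k') by ring. lra.
Qed.

(** ** Eventually-zero sequences: countable and dense in 2^ℕ *)

Definition eventually_false (p : nat -> bool) : Prop :=
  exists k0, forall k, (k0 <= k)%nat -> p k = false.

Lemma eventually_false_testbit (p : nat -> bool) :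
  eventually_false p -> exists n, forall i, Nat.testbit n i = p i.
Proof.
  intros [k0 Hk]. revert p Hk. induction k0 as [|k0 IH]; intros p Hk.
  - exists O. intros i. rewrite Hk by lia. apply Nat.bits_0.
  - destruct (IH (fun i => p (S i))) as [n' Hn'].
    { intros k Hk'. apply Hk. lia. }
    exists (2 * n' + (if p O then 1 else 0))%nat.
    intros [|i]; destruct (p O) eqn:E.
    + apply Nat.testbit_odd_0.
    + rewrite Nat.add_0_r. apply Nat.testbit_even_0.
    + rewrite Nat.testbit_odd_succ by lia. apply Hn'.
    + rewrite Nat.add_0_r, Nat.testbit_even_succ by lia. apply Hn'.
Qed.

Lemma eventually_false_truncate (p : nat -> bool) n :
  exists p', eventually_false p' /\ agree n p p'.
Proof.
  exists (fun i => if Nat.ltb i n then p i else false). split.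
  - exists n. intros k Hk. rewrite (proj2 (Nat.ltb_ge k n) Hk). reflexivity.
  - intros i Hi. rewrite (proj2 (Nat.ltb_lt i n) Hi). reflexivity.
Qed.

Lemma Cantor_trace {A : Type} (h : (nat -> bool) -> nat -> A) (P : (nat -> A) -> Prop) :
  (forall p p' n, agree n p p' -> agree n (h p) (h p')) ->
  (forall p, eventually_false p -> P (h p)) ->
  (forall p, ~ eventually_false p -> ~ P (h p)) ->
  countable_set (fun x => (exists p, h p = x) /\ P x) /\
  dense_in (fun x => (exists p, h p = x) /\ P x) (fun x => exists p, h p = x).
Proof.
  intros Hc HP HnP. split.
  - exists (fun n => h (fun i => Nat.testbit n i)).
    intros x [[p <-] Hx]. destruct (classic (eventually_false p)) as [H|H].
    + destruct (eventually_false_testbit p H) as [n Hn]. exists n. f_equal.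
      apply functional_extensionality. auto.
    + exfalso. exact (HnP p H Hx).
  - intros c n [p <-]. destruct (eventually_false_truncate p n) as [p' [He Ha]].
    exists (h p'). split; [split; [exists p'; reflexivity | auto]|].
    apply prefix_agree, agree_sym, Hc, Ha.
Qed.

(** ** F_σ separation *)

Definition closed_seq {A : Type} (K : (nat -> A) -> Prop) : Prop :=
  forall x, ~ K x -> exists n, forall y, agree n x y -> ~ K y.

Definition Fsigma_separable {A : Type} (B S : (nat -> A) -> Prop) : Prop :=
  exists Ks : nat -> (nat -> A) -> Prop,
    (forall n, closed_seq (Ks n)) /\ (forall n x, Ks n x -> ~ B x) /\
    (forall x, S x -> exists n, Ks n x).

Section Separation.
Variables (A : Type) (B : (nat -> A) -> Prop).

Lemma separable_mono (S S' : (nat -> A) -> Prop) :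
  (forall x, S x -> S' x) -> Fsigma_separable B S' -> Fsigma_separable B S.
Proof. intros H [Ks [H1 [H2 H3]]]. exists Ks. repeat split; auto. Qed.

Lemma separable_closed (S K : (nat -> A) -> Prop) :
  closed_seq K -> (forall x, K x -> ~ B x) -> (forall x, S x -> K x) ->
  Fsigma_separable B S.
Proof.
  intros H1 H2 H3. exists (fun _ => K). split; [|split]; auto.
  intros x Hx. exists O. auto.
Qed.

Lemma separable_empty (S : (nat -> A) -> Prop) :
  (forall x, ~ S x) -> Fsigma_separable B S.
Proof.
  intros H. apply (separable_closed S (fun _ => False)).
  - intros x _. exists O. intros y _ F. exact F.
  - intros x [].
  - exact H.
Qed.

Lemma separable_countable_union (S : nat -> (nat -> A) -> Prop) :
  (forall c, Fsigma_separable B (S c)) -> Fsigma_separable B (fun x => exists c, S c x).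
Proof.
  intros H. apply choice in H as [KK HK].
  exists (fun m => let (c, n) := Cantor.of_nat m in KK c n). repeat split.
  - intros m. destruct (Cantor.of_nat m) as [c n]. apply HK.
  - intros m x. destruct (Cantor.of_nat m) as [c n]. apply HK.
  - intros x [c Hc]. destruct (proj2 (proj2 (HK c)) x Hc) as [n Hn].
    exists (Cantor.to_nat (c, n)). rewrite Cantor.cancel_of_to. auto.
Qed.

Lemma separable_union2 (S1 S2 : (nat -> A) -> Prop) :
  Fsigma_separable B S1 -> Fsigma_separable B S2 ->
  Fsigma_separable B (fun x => S1 x \/ S2 x).
Proof.
  intros H1 H2.
  apply (separable_mono _ (fun x => exists c, match c with O => S1 x | _ => S2 x end)).
  - intros x [Hx|Hx]; [exists O | exists 1%nat]; auto.
  - apply separable_countable_union. intros [|c]; auto.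
Qed.

End Separation.

(** ** A Hurewicz-type theorem: non-separable analytic sets contain Cantor sets *)

Fixpoint encode_list (l : list nat) : nat :=
  match l with
  | [] => O
  | a :: l => S (Cantor.to_nat (a, encode_list l))
  end.

Lemma encode_list_inj l l' : encode_list l = encode_list l' -> l = l'.
Proof.
  revert l'. induction l as [|a l IH]; intros [|a' l'] H; cbn [encode_list] in H;
    try discriminate; auto.
  apply Nat.succ_inj, Cantor.to_nat_inj in H. injection H as -> H. f_equal. auto.
Qed.

Section Hurewicz.
Variables (A : Type) (a0 : A) (enc : A -> nat).
Hypothesis enc_inj : forall a b, enc a = enc b -> a = b.
Variables (An B : (nat -> A) -> Prop) (F : list A -> list nat -> Prop).
Hypothesis An_projection :
  forall x, An x <-> exists y : nat -> nat, forall n, F (prefix x n) (prefix y n).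
Hypothesis An_B_disjoint : forall x, An x -> B x -> False.
Hypothesis An_not_separable : ~ Fsigma_separable B An.

Definition in_F (x : nat -> A) (y : nat -> nat) : Prop :=
  forall n, F (prefix x n) (prefix y n).

Definition in_box (cx : nat -> A) (cy : nat -> nat) (nx ny : nat)
    (x : nat -> A) (y : nat -> nat) : Prop :=
  agree nx x cx /\ agree ny y cy.

Lemma in_box_agree cx cy nx ny cx' cy' x y : agree nx cx cx' -> agree ny cy cy' ->
  in_box cx cy nx ny x y -> in_box cx' cy' nx ny x y.
Proof. intros H1 H2 [H3 H4]. split; eapply agree_trans; eauto. Qed.

Definition small_box cx cy nx ny : Prop :=
  Fsigma_separable B (fun x => exists y, in_F x y /\ in_box cx cy nx ny x y).

Definition in_small_box x y : Prop :=
  exists cx cy nx ny, small_box cx cy nx ny /\ in_box cx cy nx ny x y.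

Definition kernel x y : Prop := in_F x y /\ ~ in_small_box x y.

(** Since A is countable, boxes are coded by natural numbers. *)
Definition box_code (cx : nat -> A) (cy : nat -> nat) (nx ny : nat) : nat :=
  Cantor.to_nat (Cantor.to_nat (nx, ny),
    Cantor.to_nat (encode_list (prefix (fun i => enc (cx i)) nx),
                   encode_list (prefix cy ny))).

Lemma box_code_inj cx cy nx ny cx' cy' nx' ny' :
  box_code cx cy nx ny = box_code cx' cy' nx' ny' ->
  nx = nx' /\ ny = ny' /\ agree nx cx cx' /\ agree ny cy cy'.
Proof.
  unfold box_code. intros H.
  apply Cantor.to_nat_inj, pair_equal_spec in H as [Hn Hc].
  apply Cantor.to_nat_inj, pair_equal_spec in Hn as [<- <-].
  apply Cantor.to_nat_inj, pair_equal_spec in Hc as [Hx Hy].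
  apply encode_list_inj, prefix_agree in Hx. apply encode_list_inj, prefix_agree in Hy.
  repeat split; auto. intros i Hi. apply enc_inj, Hx, Hi.
Qed.

(** The part of F covered by small boxes is small: it is a countable union
    of small sets, one for each box code. *)
Lemma small_boxes_separable :
  Fsigma_separable B (fun x => exists y, in_F x y /\ in_small_box x y).
Proof.
  apply (separable_mono _ _ _ (fun x => exists c, exists cx cy nx ny,
      small_box cx cy nx ny /\ box_code cx cy nx ny = c /\
      exists y, in_F x y /\ in_box cx cy nx ny x y)).
  - intros x [y [HF [cx [cy [nx [ny [Hs Hi]]]]]]].
    exists (box_code cx cy nx ny), cx, cy, nx, ny. repeat split; auto. exists y. auto.
  - apply separable_countable_union. intros c.
    destruct (classic (exists cx cy nx ny, small_box cx cy nx ny /\ box_code cx cy nx ny = c))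
      as [[cx [cy [nx [ny [Hs Hc]]]]]|Hn].
    + eapply separable_mono; [|exact Hs].
      intros x [cx' [cy' [nx' [ny' [_ [Hc' [y [HF Hi]]]]]]]].
      rewrite <- Hc in Hc'. apply box_code_inj in Hc' as [-> [-> [Ha1 Ha2]]].
      exists y. split; auto. eapply in_box_agree; eauto.
    + apply separable_empty. intros x [cx [cy [nx [ny [Hs [Hc _]]]]]].
      apply Hn. exists cx, cy, nx, ny. auto.
Qed.

Lemma kernel_separable_small cx cy nx ny :
  Fsigma_separable B (fun x => exists y, kernel x y /\ in_box cx cy nx ny x y) ->
  small_box cx cy nx ny.
Proof.
  intros H.
  eapply separable_mono; [|exact (separable_union2 _ _ _ _ H small_boxes_separable)].
  intros x [y [HF Hi]]. destruct (classic (in_small_box x y)).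
  - right. exists y. auto.
  - left. exists y. split; [split|]; auto.
Qed.

Lemma kernel_nonempty : exists x y, kernel x y.
Proof.
  apply NNPP. intros Hn. apply An_not_separable.
  eapply separable_mono; [|exact small_boxes_separable].
  intros x Hx. apply An_projection in Hx as [y Hy]. exists y. split; auto.
  apply NNPP. intros Hs. apply Hn. exists x, y. split; auto.
Qed.

Lemma kernel_An x y : kernel x y -> An x.
Proof. intros [HF _]. apply An_projection. exists y. exact HF. Qed.

Definition kernel_limit cx cy nx ny (b : nat -> A) : Prop :=
  forall m, exists x y, kernel x y /\ in_box cx cy nx ny x y /\ agree m x b.

(** Every box meeting the kernel has a point of B in the closure of its
    kernel part: otherwise that closure would separate the kernel part from B. *)
Lemma kernel_box_B_limit cx cy nx ny x y : kernel x y -> in_box cx cy nx ny x y ->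
  exists b, B b /\ kernel_limit cx cy nx ny b.
Proof.
  intros [HF Hns] Hi. apply NNPP. intros Hn. apply Hns.
  exists cx, cy, nx, ny. split; auto. apply kernel_separable_small.
  apply (separable_closed _ _ _ (kernel_limit cx cy nx ny)).
  - intros b Hb. apply not_all_ex_not in Hb as [m Hm]. exists m. intros b' Hb' Kb'.
    apply Hm. destruct (Kb' m) as [x' [y' [H1 [H2 H3]]]]. exists x', y'.
    split; [|split]; auto. eapply agree_trans; [exact H3 | apply agree_sym; auto].
  - intros b Kb Bb. apply Hn. exists b. auto.
  - intros x' [y' [H1 H2]] m. exists x', y'. split; [|split]; auto. apply agree_refl.
Qed.

Record node := mk_node {
  witness : nat -> A; box_x : nat -> A; box_y : nat -> nat; len_x : nat; len_y : nat }.

Definition good_node (D : node) : Prop :=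
  B (witness D) /\ kernel_limit (box_x D) (box_y D) (len_x D) (len_y D) (witness D) /\
  agree (len_x D) (witness D) (box_x D).

(** Splitting a good node at depth d: a kernel point x in the box distinct
    from the witness is chosen, with m > d large enough to separate x from the
    witness.  The left child keeps the witness and shrinks the x-box around
    it; the right child is a box of length m around (x, y), with a new
    witness given by [kernel_box_B_limit]. *)
Definition good_split (D : node) (d : nat) (children : node * node) : Prop :=
  exists x y m, kernel x y /\ in_box (box_x D) (box_y D) (len_x D) (len_y D) x y /\
    (len_x D < m)%nat /\ (len_y D < m)%nat /\ (d < m)%nat /\ ~ agree m x (witness D) /\
    fst children = mk_node (witness D) (witness D) (box_y D) m (len_y D) /\
    box_x (snd children) = x /\ box_y (snd children) = y /\
    len_x (snd children) = m /\ len_y (snd children) = m /\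
    good_node (fst children) /\ good_node (snd children).

Lemma good_split_exists D d : good_node D -> exists children, good_split D d children.
Proof.
  intros [HB [Hlim Hw]].
  destruct (Hlim O) as [x [y [HZ [Hi _]]]].
  assert (Hxb : exists i, x i <> witness D i).
  { apply NNPP. intros Hn. apply (An_B_disjoint x); [eapply kernel_An; eauto|].
    replace x with (witness D); auto. apply functional_extensionality. intros i.
    apply NNPP. intros Hi'. apply Hn. exists i. intros E. apply Hi'. auto. }
  destruct Hxb as [i Hxi].
  set (m := S (Nat.max (Nat.max (len_x D) (len_y D)) (Nat.max d i))).
  destruct (kernel_box_B_limit x y m m x y HZ (conj (agree_refl _ _) (agree_refl _ _)))
    as [b' [HBb' Hb']].
  exists (mk_node (witness D) (witness D) (box_y D) m (len_y D), mk_node b' x y m m).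
  exists x, y, m. cbn [fst snd box_x box_y len_x len_y witness].
  do 2 (split; auto). do 3 (split; [unfold m; lia|]).
  split. { intros Ha. apply Hxi. apply Ha. unfold m; lia. }
  do 5 (split; [reflexivity|]). split.
  - unfold good_node; cbn [witness box_x box_y len_x len_y].
    split; auto. split; [|apply agree_refl].
    intros m'. destruct (Hlim (Nat.max m' m)) as [x2 [y2 [HZ2 [[Hi1 Hi2] Ha2]]]].
    exists x2, y2. split; [|split; [split|]]; auto; eapply agree_le; try exact Ha2; lia.
  - unfold good_node; cbn [witness box_x box_y len_x len_y].
    do 2 (split; auto).
    destruct (Hb' m) as [x' [y' [_ [[Hi1 _] Ha]]]].
    eapply agree_trans; [apply agree_sym; exact Ha | exact Hi1].
Qed.

Definition default_node := mk_node (fun _ => a0) (fun _ => a0) (fun _ => O) O O.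

Definition split_node (D : node) (d : nat) : node * node :=
  epsilon (inhabits (default_node, default_node)) (good_split D d).

Lemma split_node_spec D d : good_node D -> good_split D d (split_node D d).
Proof. intros H. unfold split_node. apply epsilon_spec, good_split_exists, H. Qed.

Definition child (c : bool) (D : node) (d : nat) : node :=
  if c then snd (split_node D d) else fst (split_node D d).

Lemma root_node_exists : exists D, good_node D.
Proof.
  destruct kernel_nonempty as [x [y HZ]].
  destruct (kernel_box_B_limit x y O O x y HZ (conj (agree_refl _ _) (agree_refl _ _)))
    as [b [HB Hb]].
  exists (mk_node b x y O O). split; [|split]; auto. intros i Hi. simpl in Hi. lia.
Qed.

Fixpoint node_at (p : nat -> bool) (n : nat) : node :=
  match n with
  | O => epsilon (inhabits default_node) good_node
  | S n => child (p n) (node_at p n) n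
  end.

Lemma node_at_good p n : good_node (node_at p n).
Proof.
  induction n as [|n IH].
  - simpl. apply epsilon_spec, root_node_exists.
  - destruct (split_node_spec (node_at p n) n IH) as [x [y [m H]]].
    simpl. unfold child. destruct (p n); tauto.
Qed.

Lemma node_at_agree p p' n : agree n p p' -> node_at p n = node_at p' n.
Proof.
  induction n as [|n IH]; intros H; simpl; auto.
  rewrite IH by (eapply agree_le; [exact H|lia]). rewrite (H n) by lia. reflexivity.
Qed.

Lemma node_step p k :
  (len_x (node_at p k) < len_x (node_at p (S k)))%nat /\ (k < len_x (node_at p (S k)))%nat /\
  (len_y (node_at p k) <= len_y (node_at p (S k)))%nat /\
  agree (len_x (node_at p k)) (box_x (node_at p (S k))) (box_x (node_at p k)) /\
  agree (len_y (node_at p k)) (box_y (node_at p (S k))) (box_y (node_at p k)) /\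
  (p k = true -> (k < len_y (node_at p (S k)))%nat) /\
  (p k = false -> witness (node_at p (S k)) = witness (node_at p k) /\
                  box_x (node_at p (S k)) = witness (node_at p k)).
Proof.
  pose proof (node_at_good p k) as Hgood.
  destruct (split_node_spec (node_at p k) k Hgood) as
    [x [y [m [_ [[Hx Hy] [Hmx [Hmy [Hmk [_ [Hl [Hrx [Hry [Hrlx [Hrly _]]]]]]]]]]]]]].
  destruct Hgood as [_ [_ Hw]].
  simpl. unfold child. destruct (p k).
  - rewrite Hrx, Hry, Hrlx, Hrly.
    do 3 (split; [lia|]). do 2 (split; [auto|]).
    split; [intros; lia | discriminate].
  - rewrite Hl. cbn [witness box_x box_y len_x len_y].
    do 3 (split; [lia|]). split; [exact Hw|]. split; [apply agree_refl|].
    split; [discriminate | auto].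
Qed.

Lemma node_mono p k k' : (k <= k')%nat ->
  (len_x (node_at p k) <= len_x (node_at p k'))%nat /\
  (len_y (node_at p k) <= len_y (node_at p k'))%nat /\
  agree (len_x (node_at p k)) (box_x (node_at p k')) (box_x (node_at p k)) /\
  agree (len_y (node_at p k)) (box_y (node_at p k')) (box_y (node_at p k)).
Proof.
  intros H. induction H as [|k' H [H1 [H2 [H3 H4]]]].
  - repeat split; auto; apply agree_refl.
  - destruct (node_step p k') as [S1 [_ [S3 [S4 [S5 _]]]]].
    repeat split; try lia.
    + eapply agree_trans; [eapply agree_le; [exact S4|lia] | exact H3].
    + eapply agree_trans; [eapply agree_le; [exact S5|lia] | exact H4].
Qed.

Lemma len_x_ge p k : (k <= len_x (node_at p k))%nat.
Proof. destruct k; [lia|]. destruct (node_step p k). lia. Qed.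

(** The embedding: the limit of the x-boxes along p. *)
Definition hurewicz_map (p : nat -> bool) : nat -> A :=
  fun i => box_x (node_at p (S i)) i.

Lemma hurewicz_map_box p k : agree (len_x (node_at p k)) (hurewicz_map p) (box_x (node_at p k)).
Proof.
  intros i Hi. unfold hurewicz_map. destruct (Compare_dec.le_lt_dec (S i) k).
  - destruct (node_mono p (S i) k) as [_ [_ [H _]]]; auto.
    symmetry. apply H. pose proof (len_x_ge p (S i)). lia.
  - destruct (node_mono p k (S i)) as [_ [_ [H _]]]; [lia|]. apply H. auto.
Qed.

Lemma hurewicz_map_continuous p p' n :
  agree n p p' -> agree n (hurewicz_map p) (hurewicz_map p').
Proof.
  intros H. pose proof (hurewicz_map_box p n) as Hp. pose proof (hurewicz_map_box p' n) as Hp'.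
  rewrite (node_at_agree p p' n H) in Hp. pose proof (len_x_ge p' n).
  eapply agree_trans; [eapply agree_le; [exact Hp|lia]|].
  apply agree_sym. eapply agree_le; [exact Hp'|lia].
Qed.

Lemma hurewicz_map_separates p p' k : agree k p p' -> p k <> p' k ->
  ~ agree (len_x (node_at p (S k))) (hurewicz_map p) (hurewicz_map p').
Proof.
  intros Ha Hne Hh.
  pose proof (node_at_agree p p' k Ha) as E.
  destruct (split_node_spec (node_at p k) k (node_at_good p k)) as
    [x [y [m [_ [_ [_ [_ [_ [Hna [Hl [Hrx [_ [Hrlx _]]]]]]]]]]]]].
  pose proof (hurewicz_map_box p (S k)) as P1. pose proof (hurewicz_map_box p' (S k)) as P2.
  simpl in P1, P2, Hh. rewrite <- E in P2.
  unfold child in P1, P2, Hh.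
  destruct (p k), (p' k); try congruence; rewrite ?Hl in *; cbn [box_x len_x] in *;
    rewrite ?Hrx, ?Hrlx in *; apply Hna.
  - eapply agree_trans; [apply agree_sym; exact P1|].
    eapply agree_trans; [exact Hh | exact P2].
  - eapply agree_trans; [apply agree_sym; exact P2|].
    eapply agree_trans; [apply agree_sym; exact Hh | exact P1].
Qed.

Lemma hurewicz_map_inj p p' : hurewicz_map p = hurewicz_map p' -> p = p'.
Proof.
  intros E. apply NNPP. intros Hne. destruct (first_difference p p' Hne) as [k [Ha Hk]].
  apply (hurewicz_map_separates p p' k Ha Hk). rewrite E. apply agree_refl.
Qed.

Lemma hurewicz_map_inverse_continuous p n :
  exists N, forall p', agree N (hurewicz_map p) (hurewicz_map p') -> agree n p p'.
Proof.
  exists (len_x (node_at p n)). induction n as [|n IH]; intros p' H.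
  - intros i Hi; lia.
  - assert (Ha : agree n p p').
    { apply IH. eapply agree_le; [exact H|]. destruct (node_step p n); lia. }
    intros i Hi. destruct (Nat.eq_dec i n) as [->|]; [|apply Ha; lia].
    apply NNPP. intros Hne. exact (hurewicz_map_separates p p' n Ha Hne H).
Qed.

(** Along an eventually-zero p the witness stabilises, and the x-boxes
    close in on it: h(p) is that witness, which lies in B. *)
Lemma hurewicz_map_B p : eventually_false p -> B (hurewicz_map p).
Proof.
  intros [k0 Hk0].
  assert (Hw : forall k, (k0 <= k)%nat -> witness (node_at p k) = witness (node_at p k0)).
  { intros k Hk. induction Hk as [|k Hk IH]; auto.
    destruct (node_step p k) as [_ [_ [_ [_ [_ [_ H]]]]]].
    rewrite (proj1 (H (Hk0 k Hk))). auto. }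
  assert (E : hurewicz_map p = witness (node_at p k0)).
  { apply functional_extensionality. intros i.
    set (K := Nat.max i k0).
    destruct (node_step p K) as [_ [HK [_ [_ [_ [_ H]]]]]].
    destruct (H (Hk0 K ltac:(lia))) as [_ Hbox].
    rewrite (hurewicz_map_box p (S K) i) by lia.
    rewrite Hbox, Hw by lia. reflexivity. }
  rewrite E. apply node_at_good.
Qed.

(** Along a p with infinitely many 1s the y-boxes also grow without bound;
    their limit y witnesses (h(p), y) ∈ F, so h(p) ∈ An. *)
Lemma hurewicz_map_An p : ~ eventually_false p -> An (hurewicz_map p).
Proof.
  intros Hinf.
  assert (Hone : forall i, exists k, (i <= k)%nat /\ p k = true).
  { intros i. apply NNPP. intros Hn. apply Hinf. exists i. intros k Hk.
    destruct (p k) eqn:E; auto. exfalso. apply Hn. exists k. auto. }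
  apply choice in Hone as [next Hnext].
  set (y := fun i => box_y (node_at p (S (next i))) i).
  assert (Hy : forall n, exists K0, forall K, (K0 <= K)%nat ->
            agree n y (box_y (node_at p K)) /\ (n <= len_y (node_at p K))%nat).
  { induction n as [|n [K0 HK0]].
    - exists O. intros K _. split; [intros i Hi; lia | lia].
    - exists (Nat.max K0 (S (next n))). intros K HK.
      destruct (HK0 K ltac:(lia)) as [H1 H2].
      destruct (Hnext n) as [Ht1 Ht2].
      destruct (node_step p (next n)) as [_ [_ [_ [_ [_ [Hlen _]]]]]].
      specialize (Hlen Ht2).
      destruct (node_mono p (S (next n)) K ltac:(lia)) as [_ [Hny [_ Hcy]]].
      split; [|lia].
      intros i Hi. destruct (Nat.eq_dec i n) as [->|]; [|apply H1; lia].
      unfold y. symmetry. apply Hcy. lia. }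
  apply An_projection. exists y. intros n.
  destruct (Hy n) as [K0 HK0].
  set (K := Nat.max K0 n).
  destruct (HK0 K ltac:(lia)) as [Hy1 Hy2].
  destruct (node_at_good p K) as [_ [Hlim _]].
  destruct (Hlim O) as [zx [zy [[HF _] [[Hi1 Hi2] _]]]].
  pose proof (len_x_ge p K).
  replace (prefix (hurewicz_map p) n) with (prefix zx n).
  replace (prefix y n) with (prefix zy n).
  - apply HF.
  - apply prefix_agree. eapply agree_trans; [eapply agree_le; [exact Hi2|lia]|].
    apply agree_sym. auto.
  - apply prefix_agree. eapply agree_trans; [eapply agree_le; [exact Hi1|lia]|].
    apply agree_sym. eapply agree_le; [apply hurewicz_map_box|lia].
Qed.

Theorem hurewicz :
  exists h : (nat -> bool) -> nat -> A,
    (forall p p', h p = h p' -> p = p') /\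
    (forall p p' n, agree n p p' -> agree n (h p) (h p')) /\
    (forall p n, exists N, forall p', agree N (h p) (h p') -> agree n p p') /\
    (forall p, eventually_false p -> B (h p)) /\
    (forall p, ~ eventually_false p -> An (h p)).
Proof.
  exists hurewicz_map. repeat split.
  - exact hurewicz_map_inj.
  - exact hurewicz_map_continuous.
  - exact hurewicz_map_inverse_continuous.
  - exact hurewicz_map_B.
  - exact hurewicz_map_An.
Qed.

End Hurewicz.

(** ** Player II wins Γ(f) when every superlevel set is G_δ *)

Fixpoint count_below (P : nat -> Prop) (n : nat) : nat :=
  match n with
  | O => O
  | S n => (count_below P n + if excluded_middle_informative (P n) then 1 else 0)%nat
  end.

Lemma count_below_le P n : (count_below P n <= n)%nat.
Proof.
  induction n as [|n IH]; simpl; auto.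
  destruct (excluded_middle_informative (P n)); lia.
Qed.

Lemma count_below_mono (P Q : nat -> Prop) n m :
  (forall K, P K -> Q K) -> (n <= m)%nat -> (count_below P n <= count_below Q m)%nat.
Proof.
  intros H Hnm. induction Hnm as [|m Hnm IH].
  - induction n as [|n IH]; simpl; auto.
    destruct (excluded_middle_informative (P n)), (excluded_middle_informative (Q n));
      try lia. exfalso; auto.
  - simpl. lia.
Qed.

Lemma count_below_witness P n N :
  (N <= count_below P n)%nat -> (0 < N)%nat -> exists K, (N - 1 <= K)%nat /\ P K.
Proof.
  induction n as [|n IH]; simpl; intros H H0; [lia|].
  destruct (excluded_middle_informative (P n)).
  - exists n. pose proof (count_below_le P n). split; auto. lia.
  - apply IH; lia.
Qed.

Lemma count_below_initial P n N :
  (forall K, (K < N)%nat -> P K) -> (N <= n)%nat -> (N <= count_below P n)%nat.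
Proof.
  intros H Hn. induction Hn as [|n Hn IH]; [|simpl; lia].
  clear -H. induction N as [|N IH]; simpl; auto.
  destruct (excluded_middle_informative (P N)) as [_|Hn]; [|exfalso; apply Hn, H; lia].
  assert (N <= count_below P N)%nat by (apply IH; intros; apply H; lia). lia.
Qed.

Fixpoint max_upto (g : nat -> R) (n : nat) : R :=
  match n with O => g O | S n => Rmax (max_upto g n) (g (S n)) end.

Lemma max_upto_ge g n j : (j <= n)%nat -> g j <= max_upto g n.
Proof.
  induction n as [|n IH]; intros H; simpl.
  - replace j with O by lia. lra.
  - destruct (Nat.eq_dec j (S n)) as [->|]; [apply Rmax_r|].
    eapply Rle_trans; [apply IH; lia | apply Rmax_l].
Qed.

Lemma max_upto_attained g n : exists j, (j <= n)%nat /\ max_upto g n = g j.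
Proof.
  induction n as [|n [j [Hj E]]]; simpl; [exists O; auto|].
  unfold Rmax. destruct (Rle_dec (max_upto g n) (g (S n))).
  - exists (S n). auto.
  - exists j. split; auto.
Qed.

Lemma common_bound (P : nat -> nat -> Prop) M :
  (forall i n n', P i n -> (n <= n')%nat -> P i n') ->
  (forall i, (i < M)%nat -> exists n, P i n) ->
  exists n, forall i, (i < M)%nat -> P i n.
Proof.
  intros Hup. induction M as [|M IH]; intros H; [exists O; intros; lia|].
  destruct IH as [n Hn]; [intros; apply H; lia|].
  destruct (H M ltac:(lia)) as [n' Hn'].
  exists (Nat.max n n'). intros i Hi. destruct (Nat.eq_dec i M) as [->|].
  - eapply Hup; [exact Hn'|lia].
  - eapply Hup; [apply Hn; lia|lia].
Qed.

Definition nat_monotone (g : nat -> nat) : Prop := forall n, (g n <= g (S n))%nat.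

Lemma nat_monotone_le g : nat_monotone g -> forall a b, (a <= b)%nat -> (g a <= g b)%nat.
Proof. intros Hm a b H. induction H as [|b H IH]; auto. specialize (Hm b). lia. Qed.

Lemma nat_monotone_jump g N t : nat_monotone g -> (N <= t)%nat -> (g N < g t)%nat ->
  exists n, (N <= n)%nat /\ (n < t)%nat /\ (g n < g (S n))%nat.
Proof.
  intros Hm Hle. induction Hle as [|t Hle IH]; intros H; [lia|].
  destruct (Nat.lt_ge_cases (g N) (g t)).
  - destruct IH as [n Hn]; auto. exists n. lia.
  - exists t. specialize (Hm t). lia.
Qed.

Lemma nat_monotone_unbounded g : nat_monotone g ->
  (forall N, exists n, (N <= n)%nat /\ (g n < g (S n))%nat) ->
  forall M, exists n, (M <= g n)%nat.
Proof.
  intros Hm Hi M. induction M as [|M [n0 Hn0]]; [exists O; lia|].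
  destruct (Hi n0) as [n [H1 H2]].
  exists (S n). pose proof (nat_monotone_le g Hm n0 n H1). lia.
Qed.

Lemma pigeonhole_infinitely_often (P : nat -> nat -> Prop) K :
  (forall N, exists n, (N <= n)%nat /\ exists j, (j < K)%nat /\ P j n) ->
  exists j, (j < K)%nat /\ forall N, exists n, (N <= n)%nat /\ P j n.
Proof.
  induction K as [|K IH]; intros H.
  - destruct (H O) as [n [_ [j [Hj _]]]]. lia.
  - destruct (classic (forall N, exists n, (N <= n)%nat /\ P K n)) as [HK|HK].
    + exists K. split; auto.
    + apply not_all_ex_not in HK as [N1 HN1].
      destruct IH as [j [Hj Hj2]].
      * intros N. destruct (H (Nat.max N N1)) as [n [Hn [j [Hj HP]]]].
        exists n. split; [lia|]. exists j. split; auto.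
        destruct (Nat.eq_dec j K) as [->|]; [|lia].
        exfalso. apply HN1. exists n. split; auto; lia.
      * exists j. split; auto.
Qed.

Definition rat_enum (j : nat) : R :=
  let (a, bc) := Cantor.of_nat j in
  let (b, c) := Cantor.of_nat bc in
  (INR a - INR b) / INR (S c).

Lemma rat_enum_dense a b : a < b -> exists j, a < rat_enum j < b.
Proof.
  intros Hab. destruct (archimed_cor1 (b - a) ltac:(lra)) as [N [HN HN0]].
  destruct N as [|c]; [lia|].
  set (d := INR (S c)).
  assert (Hd : 0 < d) by (apply lt_0_INR; lia).
  destruct (archimed (a * d)) as [H1 H2].
  set (z := up (a * d)) in *.
  assert (Hz : exists u w : nat, IZR z = INR u - INR w).
  { destruct (Z.le_ge_cases 0 z).
    - exists (Z.to_nat z), O. rewrite (INR_IZR_INZ (Z.to_nat z)), Z2Nat.id by lia.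
      simpl. ring.
    - exists O, (Z.to_nat (- z)). rewrite (INR_IZR_INZ (Z.to_nat (- z))), Z2Nat.id by lia.
      rewrite opp_IZR. simpl. ring. }
  destruct Hz as [u [w Hz]].
  exists (Cantor.to_nat (u, Cantor.to_nat (w, c))).
  unfold rat_enum. rewrite !Cantor.cancel_of_to. fold d. rewrite <- Hz.
  assert (Hgap : (b - a) * d > 1).
  { apply Rmult_lt_compat_r with (r := d) in HN; auto. rewrite Rinv_l in HN by lra. lra. }
  split; apply Rmult_lt_reg_r with d; auto; unfold Rdiv;
    rewrite Rmult_assoc, Rinv_l by lra; lra.
Qed.

Section II_strategy.
Variables (A : Type) (T : list A -> Prop) (f : (nat -> A) -> R)
  (U : nat -> nat -> (nat -> A) -> Prop).
Hypothesis U_open : forall j k, open_seq (U j k).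
Hypothesis U_superlevel : forall j x, body T x -> (f x >= rat_enum j <-> forall k, U j k x).

Definition confirmed (j K : nat) (s : list A) : Prop :=
  forall i k, (i <= K)%nat -> (k <= K)%nat -> rat_enum i <= rat_enum j ->
  forall y, prefix y (length s) = s -> U i k y.

Definition level (j : nat) (s : list A) : nat :=
  count_below (fun K => confirmed j K s) (length s).

Definition candidate (j : nat) (s : list A) : Prop :=
  (j <= level j s)%nat /\ (level j (removelast s) < level j s)%nat.

Definition II_move (s : list A) : R :=
  max_upto (fun j => if excluded_middle_informative (candidate j s)
                     then rat_enum j else - INR (length s)) (length s).

Section Run.
Variables (x : nat -> A) (v : nat -> R).
Hypothesis x_in_body : body T x.
Hypothesis v_by_II_move : forall t, v t = II_move (prefix x (S t)).

Definition level_at (j t : nat) : nat := level j (prefix x t).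

Definition jump (j t : nat) : Prop :=
  (j <= level_at j (S t))%nat /\ (level_at j t < level_at j (S t))%nat.

Lemma level_at_monotone j : nat_monotone (level_at j).
Proof.
  intros t. unfold level_at, level. rewrite !prefix_length.
  apply count_below_mono; [|lia].
  intros K H i k Hi Hk Hq y Hy. apply (H i k Hi Hk Hq).
  rewrite prefix_length in *. apply prefix_agree. apply prefix_agree in Hy.
  eapply agree_le; eauto.
Qed.

Lemma candidate_jump j t : candidate j (prefix x (S t)) <-> jump j t.
Proof. unfold candidate, jump, level_at. rewrite prefix_S at 2. rewrite removelast_last. tauto. Qed.

Definition II_scores (t : nat) : nat -> R :=
  fun j => if excluded_middle_informative (candidate j (prefix x (S t)))
           then rat_enum j else - INR (length (prefix x (S t))).

Lemma jump_le_move j t : jump j t -> rat_enum j <= v t.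
Proof.
  intros Hj. rewrite v_by_II_move. unfold II_move.
  assert (Hle : (j <= length (prefix x (S t)))%nat).
  { destruct Hj as [Hj _]. unfold level_at, level in Hj.
    pose proof (count_below_le (fun K => confirmed j K (prefix x (S t))) (length (prefix x (S t)))).
    lia. }
  pose proof (max_upto_ge (II_scores t) _ j Hle) as Hm. unfold II_scores in Hm.
  destruct (excluded_middle_informative _) as [_|Hn]; [exact Hm|].
  exfalso. apply Hn, candidate_jump, Hj.
Qed.

Lemma move_is_jump t : - INR (S t) < v t -> exists j, jump j t /\ v t = rat_enum j.
Proof.
  intros H. rewrite v_by_II_move in *.
  change (II_move (prefix x (S t))) with
    (max_upto (II_scores t) (length (prefix x (S t)))) in *.
  destruct (max_upto_attained (II_scores t) (length (prefix x (S t)))) as [j [_ E]].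
  rewrite E in *. exists j. unfold II_scores in *.
  destruct (excluded_middle_informative _) as [Hc|Hc].
  - apply candidate_jump in Hc. auto.
  - rewrite prefix_length in H. lra.
Qed.

Lemma confirmed_eventually j K : f x >= rat_enum j ->
  exists t0, forall t, (t0 <= t)%nat -> confirmed j K (prefix x t).
Proof.
  intros Hf.
  set (inside := fun i k n => rat_enum i <= rat_enum j -> forall y, agree n y x -> U i k y).
  assert (Hup : forall i k n n', inside i k n -> (n <= n')%nat -> inside i k n').
  { intros i k n n' H Hn Hq y Hy. apply H; auto. eapply agree_le; eauto. }
  assert (Hik : forall i, (i < S K)%nat -> exists n, forall k, (k < S K)%nat -> inside i k n).
  { intros i _. apply common_bound; [intros; eapply Hup; eauto|].
    intros k _. destruct (Rle_dec (rat_enum i) (rat_enum j)) as [Hq|Hq].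
    - assert (Hx : U i k x) by (apply (U_superlevel i x x_in_body); lra).
      destruct (U_open i k x Hx) as [n Hn]. exists n. intros _ y Hy.
      apply Hn, prefix_agree, Hy.
    - exists O. intros Hq'. lra. }
  destruct (common_bound (fun i n => forall k, (k < S K)%nat -> inside i k n) (S K))
    as [n Hn]; [intros i n n' H Hn k Hk; eapply Hup; eauto | exact Hik |].
  exists n. intros t Ht i k Hi Hk Hq y Hy. apply (Hn i ltac:(lia) k ltac:(lia) Hq).
  rewrite prefix_length in Hy. apply prefix_agree in Hy. eapply agree_le; eauto.
Qed.

Lemma level_unbounded j : f x >= rat_enum j -> forall M, exists t, (M <= level_at j t)%nat.
Proof.
  intros Hf M.
  destruct (common_bound (fun K t0 => forall t, (t0 <= t)%nat -> confirmed j K (prefix x t)) M)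
    as [t0 Ht0].
  { intros K n n' H Hn t Ht. apply H. lia. }
  { intros K _. apply confirmed_eventually, Hf. }
  exists (Nat.max t0 M). unfold level_at, level. rewrite prefix_length.
  apply count_below_initial; [|lia]. intros K HK. apply Ht0; auto. lia.
Qed.

Lemma moves_above j : f x >= rat_enum j ->
  forall N, exists n, (N <= n)%nat /\ rat_enum j <= v n.
Proof.
  intros Hf N.
  destruct (level_unbounded j Hf j) as [N2 HN2].
  set (N3 := Nat.max N N2).
  destruct (level_unbounded j Hf (S (level_at j N3))) as [t Ht].
  assert (N3 <= t)%nat.
  { destruct (Nat.le_gt_cases N3 t); auto.
    pose proof (nat_monotone_le _ (level_at_monotone j) t N3 ltac:(lia)). lia. }
  destruct (nat_monotone_jump _ N3 t (level_at_monotone j) H ltac:(lia)) as [n [Hn1 [Hn2 Hn3]]].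
  exists n. split; [lia|]. apply jump_le_move. split; auto.
  pose proof (nat_monotone_le _ (level_at_monotone j) N2 (S n) ltac:(lia)). lia.
Qed.

Lemma high_levels_confirm m :
  (forall K, exists n j, rat_enum m < rat_enum j /\ (K <= level_at j (S n))%nat) ->
  f x >= rat_enum m.
Proof.
  intros H. apply (U_superlevel m x x_in_body). intros k.
  destruct (H (S (Nat.max k m))) as [n [j [Hq HL]]].
  unfold level_at, level in HL.
  destruct (count_below_witness _ _ _ HL ltac:(lia)) as [K [HK1 HK2]].
  apply (HK2 m k ltac:(lia) ltac:(lia) ltac:(lra)). rewrite prefix_length. reflexivity.
Qed.

(** If candidates from a set Q occur infinitely often, they occur at
    arbitrarily high levels: otherwise only finitely many j are involved
    and one of them would jump, hence climb, forever. *)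
Lemma jumps_reach_high_levels (Q : nat -> Prop) :
  (forall N, exists n, (N <= n)%nat /\ exists j, Q j /\ jump j n) ->
  forall K, exists n j, Q j /\ (K <= level_at j (S n))%nat.
Proof.
  intros Hinf K. apply NNPP. intros HK.
  assert (Hlow : forall n j, Q j -> (level_at j (S n) < K)%nat).
  { intros n j Hq. apply Nat.nle_gt. intros Hle. apply HK. exists n, j. auto. }
  destruct (pigeonhole_infinitely_often (fun j n => Q j /\ jump j n) K) as [j [Hj Hj2]].
  { intros N. destruct (Hinf N) as [n [Hn [j [Hq Hjump]]]]. exists n. split; auto.
    exists j. split; auto. pose proof (Hlow n j Hq). destruct Hjump. lia. }
  destruct (nat_monotone_unbounded _ (level_at_monotone j)) with (M := K) as [n0 Hn0].
  { intros N. destruct (Hj2 N) as [n [Hn [_ [_ Hl]]]]. exists n. auto. }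
  destruct (Hj2 n0) as [n [Hn [Hq _]]].
  pose proof (Hlow n j Hq).
  pose proof (nat_monotone_le _ (level_at_monotone j) n0 (S n) ltac:(lia)). lia.
Qed.

Lemma moves_eventually_below m c : f x < rat_enum m -> rat_enum m < c ->
  exists N, forall n, (N <= n)%nat -> v n < c.
Proof.
  intros Hfm Hc. apply NNPP. intros Hn.
  destruct (INR_unbounded (Rabs c)) as [N0 HN0].
  (* infinitely many moves ≥ c, each a candidate q_j > q_m *)
  assert (Hjumps : forall N, exists n, (N <= n)%nat /\
                     exists j, rat_enum m < rat_enum j /\ jump j n).
  { intros N. apply NNPP. intros HN. apply Hn. exists (Nat.max N N0). intros n Hn'.
    apply Rnot_le_lt. intros Hle.
    assert (Hlow : - INR (S n) < v n).
    { pose proof (Rle_abs (- c)). rewrite Rabs_Ropp in *.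
      assert (INR N0 <= INR (S n)) by (apply le_INR; lia). lra. }
    destruct (move_is_jump n Hlow) as [j [Hj Hv]].
    apply HN. exists n. split; [lia|]. exists j. split; auto. lra. }
  assert (f x >= rat_enum m).
  { apply high_levels_confirm, (jumps_reach_high_levels (fun j => rat_enum m < rat_enum j)).
    exact Hjumps. }
  lra.
Qed.

Lemma II_move_limsup : is_LimSup_seq v (f x).
Proof.
  intros eps. split.
  - intros N.
    destruct (rat_enum_dense (f x - eps) (f x) ltac:(destruct eps; simpl; lra)) as [j [Hj1 Hj2]].
    destruct (moves_above j ltac:(lra) N) as [n [Hn1 Hn2]]. exists n. split; auto. lra.
  - destruct (rat_enum_dense (f x) (f x + eps) ltac:(destruct eps; simpl; lra))
      as [m [Hm1 Hm2]].
    apply (moves_eventually_below m); auto.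
Qed.

End Run.
End II_strategy.

Lemma run_against_strategy (A : Type) (sigma : list R -> A) (W : list A -> R) :
  exists v : nat -> R, forall t, v t = W (prefix (play_I sigma v) (S t)).
Proof.
  set (pos := fix pos (t : nat) : list A * list R :=
    match t with
    | O => ([], [])
    | S t => (fst (pos t) ++ [sigma (snd (pos t))],
              snd (pos t) ++ [W (fst (pos t) ++ [sigma (snd (pos t))])])
    end).
  set (v := fun t => last (snd (pos (S t))) 0).
  assert (Hv : forall t, v t = W (fst (pos t) ++ [sigma (snd (pos t))])).
  { intros t. unfold v. simpl. rewrite last_last. reflexivity. }
  assert (Hpos : forall t, snd (pos t) = prefix v t /\ fst (pos t) = prefix (play_I sigma v) t).
  { induction t as [|t [H1 H2]]; [split; reflexivity|]. rewrite !prefix_S. split.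
    - change (snd (pos (S t))) with
        (snd (pos t) ++ [W (fst (pos t) ++ [sigma (snd (pos t))])]).
      rewrite <- Hv, H1. reflexivity.
    - change (fst (pos (S t))) with (fst (pos t) ++ [sigma (snd (pos t))]).
      rewrite H2, H1. reflexivity. }
  exists v. intros t. rewrite Hv, prefix_S. destruct (Hpos t) as [H1 H2].
  rewrite H2, H1. reflexivity.
Qed.

Definition superlevel_Gdelta {A : Type} (T : list A -> Prop) (f : (nat -> A) -> R) (r : R) :=
  exists Uk : nat -> (nat -> A) -> Prop, (forall k, open_seq (Uk k)) /\
    forall x, body T x -> (f x >= r <-> forall k, Uk k x).

Theorem II_defeats_I (A : Type) (T : list A -> Prop) (f : (nat -> A) -> R)
    (sigma : list R -> A) :
  is_tree T -> (forall r, superlevel_Gdelta T f r) -> ~ I_winning_strategy T f sigma.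
Proof.
  intros Htree HG Hsigma.
  destruct (choice _ (fun j => HG (rat_enum j))) as [U HU].
  destruct (run_against_strategy A sigma (II_move A U)) as [v Hv].
  destruct (Hsigma v) as [Hlegal Hlose].
  assert (Hx : body T (play_I sigma v)) by (intros [|n]; [apply Htree | apply Hlegal]).
  apply Hlose. symmetry. apply is_LimSup_seq_unique.
  exact (II_move_limsup A T f U (fun j => proj1 (HU j)) (fun j => proj2 (HU j)) _ v Hx Hv).
Qed.

Lemma separable_complement_Gdelta {A : Type} (T : list A -> Prop) (f : (nat -> A) -> R) r :
  Fsigma_separable (fun x => body T x /\ f x >= r)
                   (fun x => body T x /\ ~ (body T x /\ f x >= r)) ->
  superlevel_Gdelta T f r.
Proof.
  intros [Ks [HKclosed [HKdisj HKcover]]].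
  exists (fun k x => ~ Ks k x). split.
  - intros k x Hx. destruct (HKclosed k x Hx) as [n Hn]. exists n. intros y Hy.
    apply Hn, agree_sym, prefix_agree, Hy.
  - intros x Hx. split.
    + intros Hf k HKx. exact (HKdisj k x HKx (conj Hx Hf)).
    + intros Hall. apply NNPP. intros Hf.
      destruct (HKcover x) as [n Hn]; [split; [auto | intros [_ H]; auto]|].
      exact (Hall n Hn).
Qed.

Theorem mainTheorem11 (A : Type) (T : list A -> Prop) (f : (nat -> A) -> R) :
  inhabited A -> countable_type A ->
  is_tree T -> is_pruned T ->
  semi_Borel T f ->
  (exists sigma : list R -> A, I_winning_strategy T f sigma) ->
  exists (r : R) (C : (nat -> A) -> Prop),
    (forall x, C x -> body T x) /\ Cantor_set C /\
    countable_set (fun x => C x /\ f x >= r) /\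
    dense_in (fun x => C x /\ f x >= r) C.
Proof.
  intros [a0] [enc enc_inj] Htree _ Hsemi [sigma Hsigma].
  assert (Hr : exists r, ~ superlevel_Gdelta T f r).
  { apply not_all_ex_not. intros HG. exact (II_defeats_I A T f sigma Htree HG Hsigma). }
  destruct Hr as [r Hr].
  destruct (Hsemi r) as [F HF].
  destruct (hurewicz A a0 enc enc_inj
              (fun x => body T x /\ ~ (body T x /\ f x >= r))
              (fun x => body T x /\ f x >= r) F HF)
    as [h [Hinj [Hcont [Hicont [HB HAn]]]]].
  { intros x [_ H1] H2. exact (H1 H2). }
  { intros Hsep. exact (Hr (separable_complement_Gdelta T f r Hsep)). }
  exists r, (fun c => exists p, h p = c).
  destruct (Cantor_trace h (fun x => f x >= r) Hcont) as [Hcount Hdense].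
  { intros p Hp. apply HB, Hp. }
  { intros p Hp Hf. apply (HAn p Hp). split; [apply HAn, Hp | exact Hf]. }
  split; [|split; [apply Cantor_set_image; auto | auto]].
  intros x [p <-]. destruct (classic (eventually_false p)) as [Hp|Hp].
  - apply HB, Hp.
  - apply HAn, Hp.
Qed.
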